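(* $r^{(1)}=\frac nN$. Moreover, an $(N,n)$ dual pair $(F,G)$ for $\mathcal H$ belongs to $\mathcal R^{(1)}$ if and only if it is $1$-uniform, i.e. $\langle f_i,g_i\rangle=\frac nN$ for all $i$.
   Context: $\mathcal H$ is a complex Hilbert space of finite dimension $n$, inner product linear in the first argument, $N\ge n$. A finite sequence $F=\{f_i\}_{i=1}^N$ is a frame if there are $0<A\le B$ with $A\|f\|^2\le\sum_i|\langle f,f_i\rangle|^2\le B\|f\|^2$ for all $f$. $G=\{g_i\}_{i=1}^N$ is a dual of $F$ if $f=\sum_i\langle f,g_i\rangle f_i$ for all $f$; $(F,G)$ is then an $(N,n)$ dual pair. A dual pair is $1$-uniform if $\langle f_i,g_i\rangle$ is independent of $i$. $E_{\Lambda,F,G}f=\sum_{i\in\Lambda}\langle f,f_i\rangle g_i$ for $\Lambda\subseteq\{1,\dots,N\}$; $\rho$ is spectral radius; $r^{(1)}_{F,G}=\max_{1\le i\le N}\rho(E_{\{i\},F,G})$; $r^{(1)}=\inf\{r^{(1)}_{F,G}:(F,G)\text{ an }(N,n)\text{ dual pair for }\mathcal H\}$; $\mathcal R^{(1)}=\{(F,G):r^{(1)}_{F,G}=r^{(1)}\}$. *)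

From HB Require Import structures.
From mathcomp Require Import all_boot all_order all_algebra.
From mathcomp Require Import complex.
From mathcomp Require Import classical_sets reals.
Set Implicit Arguments. Unset Strict Implicit. Unset Printing Implicit Defensive.
Import Order.TTheory GRing.Theory Num.Theory.
Local Open Scope ring_scope.
Local Open Scope classical_set_scope.

Section FrameDefs.
Variable R : realType.
Local Notation C := (R[i]).
Variable n N : nat.

Definition ip (f g : 'rV[C]_n) : C := \sum_(k < n) f 0 k * Num.conj (g 0 k).

Definition is_frame (F : 'I_N -> 'rV[C]_n) : Prop :=
  exists A B : C, 0 < A /\ A <= B /\
    forall f : 'rV[C]_n,
      A * ip f f <= \sum_(i < N) `|ip f (F i)| ^+ 2 /\
      \sum_(i < N) `|ip f (F i)| ^+ 2 <= B * ip f f.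

Definition is_dual (F G : 'I_N -> 'rV[C]_n) : Prop :=
  forall f : 'rV[C]_n, f = \sum_(i < N) ip f (G i) *: F i.

Definition dual_pair (F G : 'I_N -> 'rV[C]_n) : Prop :=
  is_frame F /\ is_frame G /\ is_dual F G.

Definition uniform1 (F G : 'I_N -> 'rV[C]_n) : Prop :=
  exists c : C, forall i, ip (F i) (G i) = c.

(* Matrix (acting on row vectors from the right, f |-> f *m M) of
   E_{Lambda,F,G} f = sum_{i in Lambda} <f, f_i> g_i. *)
Definition Emx (Lam : {set 'I_N}) (F G : 'I_N -> 'rV[C]_n) : 'M[C]_n :=
  \sum_(i in Lam) (map_mx Num.conj (F i))^T *m G i.

Definition specrad (M : 'M[C]_n) : R :=
  sup [set r : R | exists a : C, eigenvalue M a /\ Complex r 0 = `|a|].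

Definition r1FG (F G : 'I_N -> 'rV[C]_n) : R :=
  \big[Num.max/0]_(i < N) specrad (Emx [set i] F G).

Definition r1 : R :=
  inf [set r : R | exists F G : 'I_N -> 'rV[C]_n, dual_pair F G /\ r = r1FG F G].

Definition in_R1 (F G : 'I_N -> 'rV[C]_n) : Prop :=
  dual_pair F G /\ r1FG F G = r1.

End FrameDefs.

From HB Require Import structures.
From mathcomp Require Import all_boot all_order all_algebra.
From mathcomp Require Import complex.
From mathcomp Require Import classical_sets reals.
From mathcomp Require Import ring lra.
Import Order.TTheory GRing.Theory Num.Theory.
Set Implicit Arguments. Unset Strict Implicit. Unset Printing Implicit Defensive.
Local Open Scope ring_scope.

(* Duality says [sum_i g_i^* f_i = 1] as a matrix, so taking traces gives
   [sum_i <f_i, g_i> = n].  Each [E_{i}] is the rank-one map [f |-> <f, f_i> g_i],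
   whose only possible nonzero eigenvalue is [<g_i, f_i>]; hence [r^(1)_{F,G}] is
   [max_i |<f_i, g_i>| >= n/N], and by the equality case of the triangle
   inequality the bound is attained exactly when every [<f_i, g_i>] equals [n/N].
   An explicit 1-uniform dual pair shows that the infimum is [n/N]; the frame
   conditions are never an obstruction, since in finite dimension any family
   admitting a dual family is a frame (Cauchy-Schwarz). *)

Lemma sqr_sum_mul_le (R : realDomainType) (I : finType) (a b : I -> R) :
  (\sum_i a i * b i) ^+ 2 <= (\sum_i a i ^+ 2) * (\sum_i b i ^+ 2).
Proof.
set S := \sum_i _; set A := \sum_i _; set B := \sum_i _.
have sumAB : \sum_i \sum_j a i ^+ 2 * b j ^+ 2 = A * B.
  by rewrite mulr_suml; apply: eq_bigr => i _; rewrite mulr_sumr.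
have sumBA : \sum_i \sum_j a j ^+ 2 * b i ^+ 2 = A * B.
  by rewrite exchange_big.
have sumS : \sum_i \sum_j a i * b i * (a j * b j) = S ^+ 2.
  by rewrite expr2 mulr_suml; apply: eq_bigr => i _; rewrite mulr_sumr.
(* Lagrange's identity: the defect is a sum of squares *)
have : 0 <= \sum_i \sum_j (a i * b j - a j * b i) ^+ 2.
  by apply: sumr_ge0 => i _; apply: sumr_ge0 => j _; apply: sqr_ge0.
have expand i j : (a i * b j - a j * b i) ^+ 2 =
    a i ^+ 2 * b j ^+ 2 + a j ^+ 2 * b i ^+ 2 - (a i * b i * (a j * b j)) *+ 2.
  by ring.
under eq_bigr do under eq_bigr do rewrite expand.
under eq_bigr do rewrite sumrB big_split sumrMnl.
rewrite sumrB big_split sumrMnl /= sumAB sumBA sumS.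
by rewrite subr_ge0 -mulr2n ler_pMn2r.
Qed.

Section Normc.
Variable R : realType.
Local Notation C := (R[i]).
Local Notation normc := (@Normc.normc R).

Lemma normcE (x : C) : `|x| = ((normc x)%:C)%C.
Proof. by []. Qed.

Lemma normc_ge0 (x : C) : 0 <= normc x.
Proof. by rewrite -ler0c -normcE normr_ge0. Qed.

Lemma normc_real (x : R) : 0 <= x -> normc (x%:C)%C = x.
Proof. by move=> x0; rewrite /Normc.normc /= expr0n addr0 sqrtr_sqr ger0_norm. Qed.

Lemma normc_conj (x : C) : normc (Num.conj x) = normc x.
Proof. by apply: complexI; rewrite -!normcE normcJ. Qed.

Lemma normc_sum (I : finType) (x : I -> C) : normc (\sum_i x i) <= \sum_i normc (x i).
Proof. by rewrite -lecR -normcE rmorph_sum; apply: ler_norm_sum. Qed.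

Lemma mul_conj_normc (x : C) : x * Num.conj x = ((normc x ^+ 2)%:C)%C.
Proof. by rewrite -normCK normcE rmorphXn. Qed.

End Normc.

Section InnerProduct.
Variables (R : realType) (n : nat).
Local Notation C := (R[i]).
Local Notation normc := (@Normc.normc R).
Implicit Types f g : 'rV[C]_n.

Lemma ip_mx f g : f *m (map_mx Num.conj g)^T = (ip f g)%:M.
Proof.
apply/matrixP => i j; rewrite !ord1 !mxE.
by apply: eq_bigr => k _; rewrite !mxE.
Qed.

Lemma conj_ip f g : Num.conj (ip f g) = ip g f.
Proof.
rewrite /ip rmorph_sum; apply: eq_bigr => k _.
by rewrite rmorphM /= conjCK mulrC.
Qed.

Lemma ipZl (c : C) f g : ip (c *: f) g = c * ip f g.
Proof. by rewrite /ip mulr_sumr; apply: eq_bigr => k _; rewrite mxE mulrA. Qed.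

Lemma ip0l g : ip 0 g = 0.
Proof. by rewrite -(scale0r (0 : 'rV[C]_n)) ipZl mul0r. Qed.

Lemma ip_suml (I : finType) (a : I -> C) (F : I -> 'rV[C]_n) g :
  ip (\sum_i a i *: F i) g = \sum_i a i * ip (F i) g.
Proof.
rewrite /ip; under eq_bigr do rewrite summxE mulr_suml.
rewrite exchange_big; apply: eq_bigr => i _; rewrite mulr_sumr.
by apply: eq_bigr => k _; rewrite mxE mulrA.
Qed.

Definition normsq f : R := \sum_k normc (f 0 k) ^+ 2.

Lemma normsq_ge0 f : 0 <= normsq f.
Proof. by apply: sumr_ge0 => k _; rewrite exprn_ge0 ?normc_ge0. Qed.

Lemma ip_normsq f : ip f f = ((normsq f)%:C)%C.
Proof. by rewrite /ip rmorph_sum; apply: eq_bigr => k _; apply: mul_conj_normc. Qed.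

Lemma normc_ip_sqr_le f g : normc (ip f g) ^+ 2 <= normsq f * normsq g.
Proof.
have le_sum : normc (ip f g) <= \sum_k normc (f 0 k) * normc (g 0 k).
  apply: le_trans (normc_sum _) _.
  by under eq_bigr do rewrite Normc.normcM normc_conj.
apply: le_trans (sqr_sum_mul_le _ _).
rewrite ler_pXn2r ?nnegrE ?normc_ge0 //.
by apply: sumr_ge0 => k _; rewrite mulr_ge0 ?normc_ge0.
Qed.

End InnerProduct.

Section Duality.
Variables (R : realType) (n N : nat).
Local Notation C := (R[i]).
Local Notation normc := (@Normc.normc R).
Implicit Types F G : 'I_N -> 'rV[C]_n.

Lemma dual_mxP F G :
  is_dual F G <-> \sum_i (map_mx Num.conj (G i))^T *m F i = 1%:M.
Proof.
have synth f : f *m (\sum_i (map_mx Num.conj (G i))^T *m F i) =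
               \sum_i ip f (G i) *: F i.
  rewrite mulmx_sumr; apply: eq_bigr => i _.
  by rewrite mulmxA ip_mx mul_scalar_mx.
split => [dualFG | sum1 f]; last by rewrite -synth sum1 mulmx1.
apply/row_matrixP => i.
by rewrite -[X in row i X]mul1mx row_mul synth -dualFG.
Qed.

Lemma sum_ip_dual F G : is_dual F G -> \sum_i ip (F i) (G i) = n%:R.
Proof.
move/dual_mxP/(congr1 mxtrace); rewrite mxtrace1 => <-.
rewrite raddf_sum; apply: eq_bigr => i _.
by rewrite /= mxtrace_mulC ip_mx mxtrace_scalar.
Qed.

Lemma dual_sym F G : is_dual F G -> is_dual G F.
Proof.
move/dual_mxP/(congr1 (fun M => (map_mx Num.conj M)^T)) => /=.
rewrite map_mx1 trmx1 map_mx_sum raddf_sum => sum1; apply/dual_mxP; rewrite -{}sum1.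
apply: eq_bigr => i _; rewrite /= map_mxM trmx_mul.
apply/matrixP => a b; rewrite !mxE; apply: eq_bigr => k _.
by rewrite !mxE /= conjCK.
Qed.

Definition frame_normsq F : R := \sum_i normsq (F i).

Lemma frame_normsq_ge0 F : 0 <= frame_normsq F.
Proof. by apply: sumr_ge0 => i _; apply: normsq_ge0. Qed.

Lemma sum_normCK F f :
  \sum_i `|ip f (F i)| ^+ 2 = ((\sum_i normc (ip f (F i)) ^+ 2)%:C)%C.
Proof. by rewrite rmorph_sum; apply: eq_bigr => i _; rewrite normcE rmorphXn. Qed.

Lemma frame_upper F f :
  \sum_i normc (ip f (F i)) ^+ 2 <= frame_normsq F * normsq f.
Proof.
rewrite /frame_normsq mulr_suml; apply: ler_sum => i _.
by rewrite mulrC normc_ip_sqr_le.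
Qed.

(* Expanding [f] along the dual pair gives [|f|^2 <= sum |<f,g_i>| |<f_i,f>|];
   Cauchy-Schwarz twice then bounds [|f|^4] by [sum |<f,g_i>|^2 * |F|^2 |f|^2]. *)
Lemma dual_frame_lower F G f : is_dual F G ->
  normsq f <= (frame_normsq F + 1) * \sum_i normc (ip f (G i)) ^+ 2.
Proof.
move=> dualFG; set X := \sum_i _.
have X0 : 0 <= X by apply: sumr_ge0 => i _; rewrite exprn_ge0 ?normc_ge0.
have s0 := normsq_ge0 f; have t0 := frame_normsq_ge0 F.
have expand : normsq f <= \sum_i normc (ip f (G i)) * normc (ip f (F i)).
  rewrite -[leLHS]normc_real // -ip_normsq {1}(dualFG f) ip_suml.
  apply: le_trans (normc_sum _) _.
  by under eq_bigr do rewrite Normc.normcM -[ip (F _) f]conj_ip normc_conj.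
have sq_bound : normsq f ^+ 2 <= X * (frame_normsq F * normsq f).
  apply: le_trans (_ : _ <= (\sum_i normc (ip f (G i)) * normc (ip f (F i))) ^+ 2) _.
    by rewrite ler_pXn2r ?nnegrE //; apply: le_trans expand.
  apply: le_trans (sqr_sum_mul_le _ _) _.
  by rewrite ler_wpM2l // frame_upper.
have [->|f_neq0] := eqVneq (normsq f) 0; first by rewrite mulr_ge0 // addr_ge0.
have f_gt0 : 0 < normsq f by rewrite lt_def f_neq0.
have : normsq f <= X * frame_normsq F.
  by rewrite -(ler_pM2r f_gt0) -expr2 -mulrA.
nra.
Qed.

Lemma is_frame_dual F G : is_dual F G -> is_frame G.
Proof.
move=> dualFG; have t0 := frame_normsq_ge0 F; have t1 := frame_normsq_ge0 G.
exists (((frame_normsq F + 1)^-1)%:C)%C, ((frame_normsq G + 1)%:C)%C.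
split; [|split].
- by rewrite ltcR invr_gt0; lra.
- by rewrite lecR (@le_trans _ _ 1) ?invf_le1 ?lerDr //; lra.
move=> f; rewrite sum_normCK ip_normsq -!rmorphM /= !lecR.
split; first by rewrite ler_pdivrMl ?dual_frame_lower //; lra.
apply: le_trans (frame_upper G f) _.
by rewrite ler_wpM2r ?normsq_ge0 // lerDl.
Qed.

Lemma dual_pair_dual F G : is_dual F G -> dual_pair F G.
Proof.
move=> dualFG; split; last split => //.
  exact: is_frame_dual (dual_sym dualFG).
exact: is_frame_dual dualFG.
Qed.

End Duality.

Section RankOne.
Variables (R : realType) (n : nat).
Local Notation C := (R[i]).
Local Notation normc := (@Normc.normc R).
Local Open Scope classical_set_scope.
Implicit Types u v : 'rV[C]_n.

Local Notation rank1 u v := ((map_mx Num.conj u)^T *m v).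

Lemma mul_rank1 u v x : x *m rank1 u v = ip x u *: v.
Proof. by rewrite mulmxA ip_mx mul_scalar_mx. Qed.

Lemma eigenvalue_rank1 u v a : eigenvalue (rank1 u v) a -> a = 0 \/ a = ip v u.
Proof.
move=> /eigenvalueP [x]; rewrite mul_rank1 => xE x_neq0.
have [->|a_neq0] := eqVneq a 0; [by left | right].
have xu_neq0 : ip x u != 0.
  apply: contraNneq x_neq0 => xu0; move: xE.
  by rewrite xu0 scale0r => /esym/eqP; rewrite scaler_eq0 (negbTE a_neq0).
have := congr1 (fun y => ip y u) xE; rewrite /= !ipZl => ipE.
by apply: (mulIf xu_neq0); rewrite -ipE mulrC.
Qed.

Lemma eigenvalue_rank1_ip u v : ip v u != 0 -> eigenvalue (rank1 u v) (ip v u).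
Proof.
move=> vu_neq0; apply/eigenvalueP; exists v; first by rewrite mul_rank1.
by apply: contraNneq vu_neq0 => ->; rewrite ip0l.
Qed.

Lemma specrad_rank1 u v : specrad (rank1 u v) = normc (ip v u).
Proof.
rewrite /specrad; set S := [set r : R | _].
have S_sub r : S r -> r = 0 \/ r = normc (ip v u).
  move=> [a [/eigenvalue_rank1 aE [->]]].
  by case: aE => ->; [left; rewrite Normc.normc0 | right].
have [vu0|vu_neq0] := eqVneq (ip v u) 0.
  have : S `<=` [set 0] by move=> r /S_sub; rewrite vu0 Normc.normc0 => -[].
  by rewrite vu0 Normc.normc0 => /subset_set1 [->|->]; [exact: sup0 | exact: sup1].
have S_max : S (normc (ip v u)).
  by exists (ip v u); split; first exact: eigenvalue_rank1_ip.
have S_ub : ubound S (normc (ip v u)).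
  by move=> r /S_sub [->|->] //; exact: normc_ge0.
apply/eqP; rewrite eq_le ge_sup //=; last by exists (normc (ip v u)).
by apply: sup_upper_bound => //; split; exists (normc (ip v u)).
Qed.

End RankOne.

Lemma r1FG_normc (R : realType) (n N : nat) (F G : 'I_N -> 'rV[R[i]]_n) :
  r1FG F G = \big[Num.max/0]_(i < N) Normc.normc (ip (F i) (G i)).
Proof.
apply: eq_bigr => i _.
by rewrite /Emx big_set1 specrad_rank1 -conj_ip normc_conj.
Qed.

Section Bound.
Variables (R : realType) (n N : nat).
Hypothesis N_gt0 : (0 < N)%N.
Local Notation C := (R[i]).
Local Notation normc := (@Normc.normc R).
Local Notation ratio := (n%:R / N%:R).
Implicit Types F G : 'I_N -> 'rV[C]_n.

Lemma ratio_ge0 : 0 <= ratio :> R.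
Proof. by rewrite divr_ge0 ?ler0n. Qed.

Lemma ratioC : ratio = ((ratio : R)%:C)%C.
Proof. by rewrite rmorphM fmorphV !rmorph_nat. Qed.

Lemma sum_ratio (K : numFieldType) : \sum_(i < N) (ratio : K) = n%:R.
Proof.
by rewrite sumr_const card_ord -[_ *+ N]mulr_natr divfK // pnatr_eq0 -lt0n.
Qed.

Lemma ratio_le_r1FG F G : is_dual F G -> ratio <= r1FG F G.
Proof.
move=> dualFG; rewrite r1FG_normc; set M := \big[_/_]_(i < N) _.
have n_le_sum : n%:R <= \sum_i normc (ip (F i) (G i)).
  by rewrite -[leLHS]normc_real ?ler0n // rmorph_nat -(sum_ip_dual dualFG) normc_sum.
have sum_le : \sum_i normc (ip (F i) (G i)) <= N%:R * M.
  have -> : N%:R * M = \sum_(i < N) M by rewrite sumr_const card_ord mulr_natl.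
  by apply: ler_sum => i _; apply: le_bigmax.
by rewrite ler_pdivrMr ?ltr0n // mulrC (le_trans n_le_sum).
Qed.

(* The [ip (F i) (G i)] sum to [n] and have modulus at most [n/N]: this forces
   equality in the triangle inequality, which pins each of them to [n/N]. *)
Lemma r1FG_ratioP F G : is_dual F G ->
  r1FG F G = ratio <-> forall i, ip (F i) (G i) = ratio.
Proof.
move=> dualFG; rewrite r1FG_normc; split => [maxE i | ipE].
  have := @normC_sum_upper _ _ predT (fun i => ip (F i) (G i)) (fun=> ratio).
  apply=> // [j _|].
    by rewrite normcE ratioC lecR -maxE; apply: le_bigmax.
  by rewrite sum_ip_dual // sum_ratio.
apply/eqP; rewrite eq_le -r1FG_normc ratio_le_r1FG // andbT r1FG_normc.
apply/bigmax_leP; split=> [|i _]; first exact: ratio_ge0.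
by rewrite ipE ratioC normc_real // ratio_ge0.
Qed.

Lemma uniform1_ratioP F G : is_dual F G ->
  uniform1 F G <-> forall i, ip (F i) (G i) = ratio.
Proof.
move=> dualFG; split => [[c ipE] i | ipE]; last by exists ratio.
have : \sum_(i < N) c = n%:R by rewrite -(sum_ip_dual dualFG); apply: eq_bigr.
rewrite ipE sumr_const card_ord => <-.
by rewrite -[c *+ N]mulr_natr mulfK // pnatr_eq0 -lt0n.
Qed.

End Bound.

Section Witness.
Variables (R : realType) (n N : nat).
Hypotheses (N_gt0 : (0 < N)%N) (n_le_N : (n <= N)%N).
Local Notation C := (R[i]).

(* [f_i = e_i] and [g_i = e_i - (N - n)/N * 1] for [i < n], [f_i = 1] and
   [g_i = 1/N * 1] for [n <= i < N], where [1] is the all-ones vector: then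
   [sum_i g_i^* f_i = 1] and [<f_i, g_i> = n/N] for every [i]. *)
Definition witness_frame_coef (i k : nat) : R := if (i < n)%N then (k == i)%:R else 1.
Definition witness_dual_coef (i k : nat) : R :=
  if (i < n)%N then (k == i)%:R - (N - n)%:R / N%:R else N%:R^-1.

Definition witness_frame (i : 'I_N) : 'rV[C]_n :=
  \row_(k < n) ((witness_frame_coef i k)%:C)%C.
Definition witness_dual (i : 'I_N) : 'rV[C]_n :=
  \row_(k < n) ((witness_dual_coef i k)%:C)%C.

Lemma N_neq0 : N%:R != 0 :> R.
Proof. by rewrite pnatr_eq0 -lt0n. Qed.

Lemma sum_delta_l (m k : nat) (g : nat -> R) : (k < m)%N ->
  \sum_(0 <= i < m) (k == i)%:R * g i = g k.
Proof.
move=> k_lt_m; rewrite big_mkord (bigD1 (Ordinal k_lt_m)) //= eqxx mul1r.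
rewrite big1 ?addr0 // => i i_neq_k.
rewrite (negbTE (_ : k != i)) ?mul0r //.
by apply: contra_neq i_neq_k => ki; apply: val_inj; rewrite /= ki.
Qed.

Lemma conjC_real (x : R) : Num.conj ((x%:C)%C : C) = (x%:C)%C.
Proof. exact: conjc_real. Qed.

Lemma ip_real (f g : 'rV[C]_n) (a b : nat -> R) :
    (forall k : 'I_n, f 0 k = ((a k)%:C)%C) ->
    (forall k : 'I_n, g 0 k = ((b k)%:C)%C) ->
  ip f g = ((\sum_(k < n) a k * b k)%:C)%C.
Proof.
move=> fE gE; rewrite /ip rmorph_sum; apply: eq_bigr => k _.
by rewrite fE gE rmorphM /= conjC_real.
Qed.

Lemma ip_witness i : ip (witness_frame i) (witness_dual i) = n%:R / N%:R.
Proof.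
rewrite (@ip_real _ _ (witness_frame_coef i) (witness_dual_coef i)) => [|k|k];
  rewrite ?mxE //.
rewrite (@ratioC R n N); congr ((_)%:C)%C; rewrite /witness_frame_coef /witness_dual_coef.
case: ltnP => [i_lt_n | _] /=; last by rewrite sumr_const card_ord mul1r mulr_natl.
set t := (N - n)%:R / N%:R.
rewrite -(big_mkord (fun=> true) (fun k => (k == i)%:R * ((k == i)%:R - t))).
rewrite (eq_bigr (fun k => (i == k :> nat)%:R * ((k == i)%:R - t))) => [|k _];
  last by rewrite eq_sym.
rewrite (sum_delta_l (fun k => (k == i)%:R - t)) // eqxx /t natrB //=.
by field; exact: N_neq0.
Qed.

Lemma dual_witness : is_dual witness_frame witness_dual.
Proof.
apply/dual_mxP/matrixP => j k; rewrite summxE.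
under eq_bigr do rewrite !mxE big_ord1 !mxE /= conjC_real -rmorphM.
rewrite -rmorph_sum !mxE -[(_ == _)%:R](rmorph_nat (real_complex R)).
congr ((_)%:C)%C.
rewrite -(big_mkord (fun=> true) (fun i => witness_dual_coef i j * witness_frame_coef i k)).
rewrite (@big_cat_nat _ _ _ n) //=.
rewrite (eq_big_nat _ _ (F2 := fun i => (k == i :> nat)%:R *
                                    ((j == i :> nat)%:R - (N - n)%:R / N%:R))); last first.
  by move=> i /andP [_ i_lt_n]; rewrite /witness_dual_coef /witness_frame_coef i_lt_n mulrC.
rewrite sum_delta_l // (eq_big_nat _ _ (F2 := fun=> N%:R^-1)); last first.
  move=> i /andP [n_le_i _].
  by rewrite /witness_dual_coef /witness_frame_coef ltnNge n_le_i mulr1.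
rewrite sumr_const_nat -[_^-1 *+ _]mulr_natl natrB //.
by field; exact: N_neq0.
Qed.

End Witness.

Local Open Scope classical_set_scope.

Lemma r1_ratio (R : realType) (n N : nat) :
  (0 < N)%N -> (n <= N)%N -> r1 R n N = n%:R / N%:R.
Proof.
move=> N_gt0 n_le_N.
set S := [set r : R | exists F G : 'I_N -> 'rV[R[i]]_n, dual_pair F G /\ r = r1FG F G].
have S_ratio : S (n%:R / N%:R).
  have dualW := @dual_witness R n N N_gt0 n_le_N.
  exists (@witness_frame R n N), (@witness_dual R n N).
  split; first exact: dual_pair_dual.
  by apply/esym/(r1FG_ratioP N_gt0 dualW); exact: ip_witness.
have S_lb : lbound S (n%:R / N%:R).
  by move=> _ [F [G [[_ [_ dualFG]] ->]]]; exact: ratio_le_r1FG.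
apply/eqP; rewrite eq_le ge_inf //=; last by exists (n%:R / N%:R).
by apply: lb_le_inf => //; exists (n%:R / N%:R).
Qed.

Theorem theorem4p2 (R : realType) (n N : nat) (hn : (0 < n)%N) (hnN : (n <= N)%N) :
  r1 R n N = n%:R / N%:R /\
  (forall F G : 'I_N -> 'rV[R[i]]_n, dual_pair F G ->
     (in_R1 F G <-> uniform1 F G) /\
     (in_R1 F G <-> forall i : 'I_N, ip (F i) (G i) = n%:R / N%:R)).
Proof.
have N_gt0 : (0 < N)%N := leq_trans hn hnN.
have r1E := r1_ratio R N_gt0 hnN.
split=> // F G dpFG; have [_ [_ dualFG]] := dpFG.
have R1_ratio : in_R1 F G <-> forall i, ip (F i) (G i) = n%:R / N%:R.
  rewrite -(r1FG_ratioP N_gt0 dualFG) /in_R1 r1E.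
  by split=> [[]|] //; split.
by rewrite uniform1_ratioP.
Qed.
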